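(* Let $(E,\|\cdot\|_E)$ be a quasi-normed symmetric sequence space with $E\subseteq c_0$ (and whose dual $E^*$ separates the points of $E$). Then $(E,\|\cdot\|_{\widehat{E}})$ is a normed symmetric sequence space; that is, $\|\cdot\|_{\widehat E}$ is a norm on $E$ and whenever $f\in L_0(\mathbb{N})$, $g\in E$ and $\mu(f)\le\mu(g)$, then $f\in E$ and $\|f\|_{\widehat{E}}\le\|g\|_{\widehat{E}}$.
   Context: A quasi-norm on a complex vector space $X$ is a map $\|\cdot\|_X:X\to\mathbb R$ with $\|x\|_X>0$ for $x\ne0$, $\|\alpha x\|_X=|\alpha|\|x\|_X$, and $\|x+y\|_X\le C(\|x\|_X+\|y\|_X)$ for some constant $C$. The envelope seminorm is $\|x\|_{\widehat{X}}=\inf\{\sum_{i=1}^n\|x_i\|_X: x=\sum_{i=1}^n x_i,\ x_i\in X,\ n\in\mathbb N\}$ (equivalently the Minkowski functional of the convex hull of the unit ball of $X$); it is a norm when $X^*$ separates points, and the Banach envelope $\widehat X$ is the completion of $(X,\|\cdot\|_{\widehat X})$. $L_0(\mathbb N)$ is the space of complex sequences with counting measure $m$; the decreasing rearrangement is $\mu(t,f)=\inf\{s\ge 0: m\{k:|f(k)|>s\}\le t\}$, identified with the sequence $(\mu(n-1,f))_{n\ge1}$. A quasi-normed symmetric sequence space is a quasi-normed space $E\subseteq L_0(\mathbb N)$ such that whenever $f\in L_0(\mathbb N)$, $g\in E$ and $\mu(f)\le\mu(g)$, then $f\in E$ and $\|f\|_E\le\|g\|_E$. *)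

From Stdlib Require Import Reals List ClassicalEpsilon.
Open Scope R_scope.

Definition C : Type := (R * R)%type.
Definition C0 : C := (0, 0).
Definition Cadd (z w : C) : C := (fst z + fst w, snd z + snd w).
Definition Cmul (z w : C) : C :=
  (fst z * fst w - snd z * snd w, fst z * snd w + snd z * fst w).
Definition Cmod (z : C) : R := sqrt (fst z ^ 2 + snd z ^ 2).

(* ---------- L_0(N): complex sequences ---------- *)
Definition seqC : Type := nat -> C.
Definition szero : seqC := fun _ => C0.
Definition sadd (x y : seqC) : seqC := fun k => Cadd (x k) (y k).
Definition sscal (a : C) (x : seqC) : seqC := fun k => Cmul a (x k).

Definition is_lower_bound (S : R -> Prop) (m : R) : Prop := forall s, S s -> m <= s.
Definition is_glb (S : R -> Prop) (m : R) : Prop :=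
  is_lower_bound S m /\ (forall b, is_lower_bound S b -> b <= m).
(* the infimum of S (meaningful when S is nonempty and bounded below) *)
Definition glb_of (S : R -> Prop) : R := epsilon (inhabits 0) (is_glb S).

(* extended reals [0, +oo] for values of the decreasing rearrangement *)
Inductive ereal : Type := Fin (r : R) | PInf.
Definition ele (a b : ereal) : Prop :=
  match a, b with
  | _, PInf => True
  | PInf, Fin _ => False
  | Fin x, Fin y => x <= y
  end.

(* m{k : |f k| > s} <= t  (t a natural number): the set has at most t elements *)
Definition dist_le (f : seqC) (s : R) (t : nat) : Prop :=
  exists l : list nat, (length l <= t)%nat /\
    forall k, Cmod (f k) > s -> In k l.
Definition mu_set (t : nat) (f : seqC) (s : R) : Prop := 0 <= s /\ dist_le f s t.
(* v is inf{s >= 0 : m{|f| > s} <= t}, with inf of the empty set = +oo *)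
Definition is_mu (t : nat) (f : seqC) (v : ereal) : Prop :=
  match v with
  | Fin r => is_glb (mu_set t f) r /\ exists s, mu_set t f s
  | PInf => forall s, ~ mu_set t f s
  end.
Definition mu (t : nat) (f : seqC) : ereal := epsilon (inhabits PInf) (is_mu t f).
(* mu(f) <= mu(g) as sequences (mu(n-1,f))_{n>=1}, i.e. at every t in N *)
Definition mu_le (f g : seqC) : Prop := forall t : nat, ele (mu t f) (mu t g).

Definition subspace (E : seqC -> Prop) : Prop :=
  E szero /\ (forall x y, E x -> E y -> E (sadd x y)) /\
  (forall a x, E x -> E (sscal a x)).

Definition is_quasinorm (E : seqC -> Prop) (nE : seqC -> R) : Prop :=
  (forall x, E x -> x <> szero -> 0 < nE x) /\
  (forall a x, E x -> nE (sscal a x) = Cmod a * nE x) /\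
  (exists K, forall x y, E x -> E y -> nE (sadd x y) <= K * (nE x + nE y)).

Definition is_norm (E : seqC -> Prop) (nE : seqC -> R) : Prop :=
  (forall x, E x -> x <> szero -> 0 < nE x) /\
  (forall a x, E x -> nE (sscal a x) = Cmod a * nE x) /\
  (forall x y, E x -> E y -> nE (sadd x y) <= nE x + nE y).

Definition symmetric (E : seqC -> Prop) (N : seqC -> R) : Prop :=
  forall f g, E g -> mu_le f g -> E f /\ N f <= N g.

Definition quasi_normed_symmetric (E : seqC -> Prop) (nE : seqC -> R) : Prop :=
  subspace E /\ is_quasinorm E nE /\ symmetric E nE.

Definition in_c0 (E : seqC -> Prop) : Prop :=
  forall f, E f -> Un_cv (fun k => Cmod (f k)) 0.

(* E^* separates points: continuous (= bounded) C-linear functionals *)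
Definition cont_lin_functional (E : seqC -> Prop) (nE : seqC -> R) (phi : seqC -> C) : Prop :=
  (forall x y, E x -> E y -> phi (sadd x y) = Cadd (phi x) (phi y)) /\
  (forall a x, E x -> phi (sscal a x) = Cmul a (phi x)) /\
  (exists K, forall x, E x -> Cmod (phi x) <= K * nE x).
Definition dual_separates (E : seqC -> Prop) (nE : seqC -> R) : Prop :=
  forall x, E x -> x <> szero ->
    exists phi, cont_lin_functional E nE phi /\ phi x <> C0.

Definition ssum (l : list seqC) : seqC := fold_right sadd szero l.
Definition nsum (nE : seqC -> R) (l : list seqC) : R :=
  fold_right (fun y acc => nE y + acc) 0 l.
Definition env_set (E : seqC -> Prop) (nE : seqC -> R) (x : seqC) (t : R) : Prop :=
  exists l : list seqC, l <> nil /\ Forall E l /\ x = ssum l /\ t = nsum nE l.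
Definition env_norm (E : seqC -> Prop) (nE : seqC -> R) (x : seqC) : R :=
  glb_of (env_set E nE x).

(* The envelope norm of x is the infimum of sum_i |x_i|_E over finite decompositions x = sum_i x_i.
   Concatenating and rescaling decompositions gives the triangle inequality and homogeneity, and a
   bounded functional phi with phi x <> 0 satisfies |phi x| <= K sum_i |x_i|_E for every
   decomposition, so the infimum is positive.  For symmetry, take f, g in c_0 with mu(f) <= mu(g)
   and list the indices of f and of g by decreasing modulus; the n-th largest entry of f is at most
   the n-th largest entry of g, so f = c (g o pi) with |c| <= 1 and pi injective on the support of c.
   The operator h |-> c (h o pi) is linear and does not increase mu, hence maps a decomposition of g
   to a decomposition of f without increasing any |h_i|_E. *)

From Pilot Require Import Defs.
From Stdlib Require Import Reals List ClassicalEpsilon.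
From Stdlib Require Import FunctionalExtensionality Classical Lia Lra.
From Coquelicot Require Complex Rcomplements.
Open Scope R_scope.

(* [C], [C0], [Cadd], [Cmul] and [Cmod] of Defs are definitionally Coquelicot's complex numbers. *)

Lemma Cmod_ge0 z : 0 <= Cmod z.
Proof. exact (Complex.Cmod_ge_0 z). Qed.

Lemma Cmod_C0 : Cmod C0 = 0.
Proof. exact Complex.Cmod_0. Qed.

Lemma Cmod_pos z : z <> C0 -> 0 < Cmod z.
Proof. exact (proj1 (Complex.Cmod_gt_0 z)). Qed.

Lemma Cmod_Cmul z w : Cmod (Cmul z w) = Cmod z * Cmod w.
Proof. exact (Complex.Cmod_mult z w). Qed.

Lemma Cmod_Cadd z w : Cmod (Cadd z w) <= Cmod z + Cmod w.
Proof. exact (Complex.Cmod_triangle z w). Qed.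

Lemma Cmul_C0_l z : Cmul C0 z = C0.
Proof. exact (Complex.Cmult_0_l z). Qed.

Lemma Cmul_C0_r z : Cmul z C0 = C0.
Proof. exact (Complex.Cmult_0_r z). Qed.

Lemma Cmul_Cadd_r a b c : Cmul a (Cadd b c) = Cadd (Cmul a b) (Cmul a c).
Proof. exact (Complex.Cmult_plus_distr_l a b c). Qed.

Lemma Cmod_Cinv a : a <> C0 -> Cmod (Complex.Cinv a) = / Cmod a.
Proof. exact (Complex.Cmod_inv a). Qed.

Lemma sadd_szero_l x : sadd szero x = x.
Proof. apply functional_extensionality; intro k; exact (Complex.Cplus_0_l (x k)). Qed.

Lemma sadd_szero_r x : sadd x szero = x.
Proof. apply functional_extensionality; intro k; exact (Complex.Cplus_0_r (x k)). Qed.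

Lemma sadd_assoc x y z : sadd x (sadd y z) = sadd (sadd x y) z.
Proof. apply functional_extensionality; intro k; exact (Complex.Cplus_assoc (x k) (y k) (z k)). Qed.

Lemma sscal_C0 x : sscal C0 x = szero.
Proof. apply functional_extensionality; intro k; apply Cmul_C0_l. Qed.

Lemma sscal_szero a : sscal a szero = szero.
Proof. apply functional_extensionality; intro k; apply Cmul_C0_r. Qed.

Lemma sscal_sadd a x y : sscal a (sadd x y) = sadd (sscal a x) (sscal a y).
Proof. apply functional_extensionality; intro k; apply Cmul_Cadd_r. Qed.

Lemma sscal_inv a x : a <> C0 -> sscal (Complex.Cinv a) (sscal a x) = x.
Proof.
  intro Ha; apply functional_extensionality; intro k; unfold sscal.
  change (Complex.Cmult (Complex.Cinv a) (Complex.Cmult a (x k)) = x k).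
  now rewrite Complex.Cmult_assoc, Complex.Cinv_l, Complex.Cmult_1_l.
Qed.

Lemma ssum_app l1 l2 : ssum (l1 ++ l2) = sadd (ssum l1) (ssum l2).
Proof.
  induction l1 as [|x l1 IH]; simpl; [now rewrite sadd_szero_l|].
  now rewrite IH, sadd_assoc.
Qed.

Lemma nsum_app nE l1 l2 : nsum nE (l1 ++ l2) = nsum nE l1 + nsum nE l2.
Proof. induction l1 as [|x l1 IH]; simpl; [ring|rewrite IH; ring]. Qed.

Lemma ssum_map (F : seqC -> seqC) l :
  F szero = szero -> (forall x y, F (sadd x y) = sadd (F x) (F y)) ->
  ssum (map F l) = F (ssum l).
Proof. intros F0 Fadd; induction l as [|x l IH]; simpl; [auto|now rewrite IH, Fadd]. Qed.

Lemma nsum_map_le nE (F : seqC -> seqC) l :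
  Forall (fun x => nE (F x) <= nE x) l -> nsum nE (map F l) <= nsum nE l.
Proof. induction 1; simpl; lra. Qed.

Lemma is_glb_exists (S : R -> Prop) b :
  (exists s, S s) -> is_lower_bound S b -> exists m, is_glb S m.
Proof.
  intros [s0 Hs0] Hb.
  destruct (completeness (fun y => S (- y))) as [m [Hub Hleast]].
  - exists (- b); intros y Hy; specialize (Hb _ Hy); lra.
  - exists (- s0); now rewrite Ropp_involutive.
  - exists (- m); split.
    + intros s Hs. enough (- s <= m) by lra. apply Hub; now rewrite Ropp_involutive.
    + intros b' Hb'. enough (m <= - b') by lra.
      apply Hleast; intros y Hy; specialize (Hb' _ Hy); lra.
Qed.

Lemma is_glb_glb_of (S : R -> Prop) b :
  (exists s, S s) -> is_lower_bound S b -> is_glb S (glb_of S).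
Proof. intros; unfold glb_of; apply epsilon_spec; eapply is_glb_exists; eauto. Qed.

Lemma is_glb_approx (S : R -> Prop) m u : is_glb S m -> m < u -> exists s, S s /\ s < u.
Proof.
  intros [_ Hgreatest] Hu; apply NNPP; intro Hno.
  enough (u <= m) by lra.
  apply Hgreatest; intros s Hs; apply Rnot_lt_le; intro; apply Hno; eauto.
Qed.

Lemma is_mu_mu t f : is_mu t f (mu t f).
Proof.
  unfold mu; apply epsilon_spec.
  destruct (classic (exists s, mu_set t f s)) as [Hne|Hempty].
  - destruct (is_glb_exists (mu_set t f) 0 Hne) as [m Hm]; [now intros s []|].
    now exists (Fin m).
  - exists PInf; intros s Hs; apply Hempty; eauto.
Qed.

(* The strict [s < s'] suffices below and spares showing that the infimum [mu t f] is attained. *)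
Lemma dist_le_of_mu_le f g s s' t :
  mu_le f g -> 0 <= s -> dist_le g s t -> s < s' -> dist_le f s' t.
Proof.
  intros Hfg Hs Hg Hss'.
  pose proof (Hfg t) as Hle; pose proof (is_mu_mu t g) as Hmug; pose proof (is_mu_mu t f) as Hmuf.
  destruct (mu t g) as [r|], (mu t f) as [r'|]; simpl in *.
  - assert (r <= s) by (apply (proj1 (proj1 Hmug)); now split).
    destruct (is_glb_approx _ _ s' (proj1 Hmuf)) as [u [[_ [l [Hlen Hl]]] Hus]]; [lra|].
    exists l; split; [exact Hlen|]; intros k Hk; apply Hl; lra.
  - contradiction.
  - exfalso; apply (Hmug s); now split.
  - exfalso; apply (Hmug s); now split.
Qed.

Lemma mu_le_of_dist_le f g :
  (forall s t, 0 <= s -> dist_le g s t -> dist_le f s t) -> mu_le f g.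
Proof.
  intros Hdist t; pose proof (is_mu_mu t g) as Hmug; pose proof (is_mu_mu t f) as Hmuf.
  destruct (mu t g) as [r|], (mu t f) as [r'|]; simpl in *; auto.
  - apply (proj2 (proj1 Hmug)); intros s [Hs Hgs].
    apply (proj1 (proj1 Hmuf)); split; auto.
  - destruct Hmug as [_ [s [Hs Hgs]]]; apply (Hmuf s); split; auto.
Qed.

Lemma mu_le_weighted_comp (c : nat -> Defs.C) (pi rho : nat -> nat) h :
  (forall k, Cmod (c k) <= 1) -> (forall k, c k <> C0 -> rho (pi k) = k) ->
  mu_le (fun k => Cmul (c k) (h (pi k))) h.
Proof.
  intros Hc Hrho; apply mu_le_of_dist_le; intros s t Hs [l [Hlen Hl]].
  exists (map rho l); rewrite length_map; split; [exact Hlen|].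
  intros k Hk; rewrite Cmod_Cmul in Hk.
  assert (Hck : c k <> C0) by (intro E0; rewrite E0, Cmod_C0 in Hk; lra).
  rewrite <- (Hrho k Hck); apply in_map, Hl.
  pose proof (Hc k); pose proof (Cmod_ge0 (c k)); pose proof (Cmod_ge0 (h (pi k))); nra.
Qed.

Lemma list_argmax {A : Type} (h : A -> R) (D : list A) :
  D <> nil -> exists j, In j D /\ forall d, In d D -> h d <= h j.
Proof.
  induction D as [|a D IH]; intro Hne; [congruence|].
  destruct D as [|b D].
  - exists a; split; [now left|]; intros d [<-|[]]; lra.
  - destruct IH as [j [Hj Hmax]]; [discriminate|].
    destruct (Rle_dec (h a) (h j)).
    + exists j; split; [now right|]; intros d [<-|Hd]; auto.
    + exists a; split; [now left|]; intros d [<-|Hd]; [lra|]; specialize (Hmax d Hd); lra.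
Qed.

(** * Enumerating a null sequence in decreasing order of modulus *)

Definition is_c0 (x : seqC) : Prop := Un_cv (fun k => Cmod (x k)) 0.

Definition is_largest_outside (x : seqC) (L : list nat) (j : nat) : Prop :=
  ~ In j L /\ forall i, ~ In i L -> Cmod (x i) <= Cmod (x j).

Definition largest_outside (x : seqC) (L : list nat) : nat :=
  epsilon (inhabits 0%nat) (is_largest_outside x L).

Fixpoint largest_indices (x : seqC) (n : nat) : list nat :=
  match n with
  | O => nil
  | S m => largest_outside x (largest_indices x m) :: largest_indices x m
  end.

Definition dec_index (x : seqC) (n : nat) : nat := largest_outside x (largest_indices x n).

Definition dec_rank (x : seqC) (k : nat) : nat :=
  epsilon (inhabits 0%nat) (fun n => dec_index x n = k).

Section DecreasingEnumeration.

Variable x : seqC.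
Hypothesis x_c0 : is_c0 x.

Lemma c0_eventually_lt e : 0 < e -> exists N, forall i, (N <= i)%nat -> Cmod (x i) < e.
Proof.
  intro He; destruct (x_c0 e He) as [N HN]; exists N; intros i Hi.
  specialize (HN i Hi); unfold R_dist in HN; rewrite Rminus_0_r in HN.
  pose proof (Rle_abs (Cmod (x i))); lra.
Qed.

(* Beyond a nonzero value only finitely many indices compete; if there is none, any fresh index works. *)
Lemma largest_outside_exists L : exists j, is_largest_outside x L j.
Proof.
  destruct (classic (exists i, ~ In i L /\ 0 < Cmod (x i))) as [[i0 [Hi0 Hpos]]|Hzero].
  - destruct (c0_eventually_lt _ Hpos) as [N HN].
    set (D := filter (fun i => if in_dec Nat.eq_dec i L then false else true) (seq 0 (N + S i0))).
    assert (HD : forall i, In i D <-> (i < N + S i0)%nat /\ ~ In i L).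
    { intro i; unfold D; rewrite filter_In, in_seq.
      destruct (in_dec Nat.eq_dec i L); intuition (try discriminate; lia). }
    destruct (list_argmax (fun k => Cmod (x k)) D) as [j [Hj Hjmax]].
    { intro HDnil; assert (Hin : In i0 D) by (apply HD; split; [lia|auto]).
      now rewrite HDnil in Hin. }
    exists j; split; [now apply HD|]; intros i Hi.
    destruct (Compare_dec.lt_dec i (N + S i0)); [now apply Hjmax, HD|].
    assert (Cmod (x i) < Cmod (x i0)) by (apply HN; lia).
    assert (Cmod (x i0) <= Cmod (x j)) by (apply Hjmax, HD; split; [lia|auto]); lra.
  - exists (S (list_max L)); split.
    + intro Hin; pose proof (proj1 (list_max_le L _) (le_n _)) as Hmax.
      rewrite Forall_forall in Hmax; specialize (Hmax _ Hin); lia.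
    + intros i Hi; pose proof (Cmod_ge0 (x (S (list_max L)))).
      enough (Cmod (x i) <= 0) by lra.
      apply Rnot_lt_le; intro; apply Hzero; eauto.
Qed.

Lemma largest_outside_spec L : is_largest_outside x L (largest_outside x L).
Proof. unfold largest_outside; apply epsilon_spec, largest_outside_exists. Qed.

Lemma In_largest_indices n j :
  In j (largest_indices x n) <-> exists i, (i < n)%nat /\ dec_index x i = j.
Proof.
  induction n as [|n IH]; simpl.
  - split; [intros []|intros [i [Hi _]]; lia].
  - rewrite IH; split.
    + intros [Hj|[i [Hi Hj]]]; [exists n|exists i]; split; auto.
    + intros [i [Hi Hj]]; destruct (Nat.eq_dec i n) as [->|]; [now left|right].
      exists i; split; [lia|auto].
Qed.

Lemma length_largest_indices n : length (largest_indices x n) = n.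
Proof. induction n; simpl; auto. Qed.

Lemma NoDup_largest_indices n : NoDup (largest_indices x n).
Proof. induction n; simpl; constructor; auto; apply largest_outside_spec. Qed.

Lemma dec_index_max n i : ~ In i (largest_indices x n) -> Cmod (x i) <= Cmod (x (dec_index x n)).
Proof. apply largest_outside_spec. Qed.

Lemma dec_index_inj i j : dec_index x i = dec_index x j -> i = j.
Proof.
  intro Hij; destruct (Compare_dec.lt_eq_lt_dec i j) as [[Hlt|Heq]|Hlt]; auto; exfalso.
  - apply (proj1 (largest_outside_spec (largest_indices x j))).
    apply In_largest_indices; eauto.
  - apply (proj1 (largest_outside_spec (largest_indices x i))).
    apply In_largest_indices; eauto.
Qed.

Lemma dec_index_antitone n m : (n <= m)%nat -> Cmod (x (dec_index x m)) <= Cmod (x (dec_index x n)).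
Proof.
  intro Hnm; apply dec_index_max; rewrite In_largest_indices; intros [i [Hi Heq]].
  apply dec_index_inj in Heq; lia.
Qed.

Lemma dec_index_onto j : x j <> C0 -> exists n, dec_index x n = j.
Proof.
  intro Hj; apply Cmod_pos in Hj; apply NNPP; intro Hmiss.
  assert (Hbelow : forall n, Cmod (x j) <= Cmod (x (dec_index x n))).
  { intro n; apply dec_index_max; rewrite In_largest_indices; intros [i [_ Hi]]; eauto. }
  destruct (c0_eventually_lt _ Hj) as [N HN].
  assert (Hincl : incl (largest_indices x (S N)) (seq 0 N)).
  { intros e He; apply In_largest_indices in He as [i [_ <-]]; apply in_seq.
    destruct (Compare_dec.lt_dec (dec_index x i) N); [lia|].
    specialize (HN (dec_index x i) ltac:(lia)); specialize (Hbelow i); lra. }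
  pose proof (NoDup_incl_length (NoDup_largest_indices (S N)) Hincl) as Hlen.
  rewrite length_largest_indices, length_seq in Hlen; lia.
Qed.

Lemma dec_index_rank j : x j <> C0 -> dec_index x (dec_rank x j) = j.
Proof. intro Hj; unfold dec_rank; apply epsilon_spec, dec_index_onto, Hj. Qed.

Lemma dec_rank_index n : dec_rank x (dec_index x n) = n.
Proof.
  apply dec_index_inj; unfold dec_rank.
  apply (epsilon_spec (inhabits 0%nat) (fun m => dec_index x m = dec_index x n)); eauto.
Qed.

End DecreasingEnumeration.

Lemma dec_index_le f g : is_c0 f -> is_c0 g -> mu_le f g ->
  forall n, Cmod (f (dec_index f n)) <= Cmod (g (dec_index g n)).
Proof.
  intros Hf Hg Hfg n; apply Rnot_lt_le; intro Hlt.
  set (s := Cmod (g (dec_index g n))) in Hlt.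
  assert (Hgs : dist_le g s n).
  { exists (largest_indices g n); rewrite length_largest_indices; split; auto.
    intros k Hk; apply NNPP; intro Hout; pose proof (dec_index_max g Hg n k Hout).
    unfold s in Hk; lra. }
  destruct (dist_le_of_mu_le f g s ((s + Cmod (f (dec_index f n))) / 2) n Hfg (Cmod_ge0 _) Hgs)
    as [L [HL HinL]]; [lra|].
  assert (Hincl : incl (largest_indices f (S n)) L).
  { intros e He; apply In_largest_indices in He as [i [Hi <-]]; apply HinL.
    pose proof (dec_index_antitone f Hf i n ltac:(lia)); lra. }
  pose proof (NoDup_incl_length (NoDup_largest_indices f Hf (S n)) Hincl) as Hlen.
  rewrite length_largest_indices in Hlen; lia.
Qed.

(* Matching the n-th largest entry of [f] with the n-th largest entry of [g]. *)
Lemma c0_rearrangement f g : is_c0 f -> is_c0 g -> mu_le f g ->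
  exists (c : nat -> Defs.C) (pi rho : nat -> nat),
    (forall k, Cmod (c k) <= 1) /\ (forall k, c k <> C0 -> rho (pi k) = k) /\
    f = fun k => Cmul (c k) (g (pi k)).
Proof.
  intros Hf Hg Hfg.
  set (pi := fun k => dec_index g (dec_rank f k)).
  set (c := fun k => if excluded_middle_informative (f k = C0) then C0
                     else Cmul (Complex.Cinv (g (pi k))) (f k)).
  assert (Hdom : forall k, f k <> C0 -> Cmod (f k) <= Cmod (g (pi k))).
  { intros k Hk; rewrite <- (dec_index_rank f Hf k Hk) at 1; now apply dec_index_le. }
  assert (Hgpi : forall k, f k <> C0 -> g (pi k) <> C0).
  { intros k Hk Hz; pose proof (Hdom k Hk); pose proof (Cmod_pos _ Hk).
    rewrite Hz, Cmod_C0 in *; lra. }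
  exists c, pi, (fun j => dec_index f (dec_rank g j)); repeat split.
  - intro k; unfold c; destruct (excluded_middle_informative (f k = C0)) as [|Hk].
    + rewrite Cmod_C0; lra.
    + rewrite Cmod_Cmul, Cmod_Cinv by now apply Hgpi.
      pose proof (Hdom k Hk); pose proof (Cmod_pos _ (Hgpi k Hk)).
      apply (Rmult_le_reg_l (Cmod (g (pi k)))); [lra|].
      rewrite <- Rmult_assoc, Rinv_r, Rmult_1_l, Rmult_1_r; lra.
  - intros k Hck; unfold pi; rewrite dec_rank_index, dec_index_rank; auto.
    intro Hk; apply Hck; unfold c; now destruct (excluded_middle_informative (f k = C0)).
  - apply functional_extensionality; intro k; unfold c.
    destruct (excluded_middle_informative (f k = C0)) as [Hk|Hk].
    + now rewrite Hk, Cmul_C0_l.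
    + change (f k = Complex.Cmult (Complex.Cmult (Complex.Cinv (g (pi k))) (f k)) (g (pi k))).
      rewrite Complex.Cmult_comm, Complex.Cmult_assoc, Complex.Cinv_r by now apply Hgpi.
      symmetry; apply Complex.Cmult_1_l.
Qed.

(** * The envelope norm *)

Section Envelope.

Variables (E : seqC -> Prop) (nE : seqC -> R).
Hypothesis E_szero : E szero.
Hypothesis E_sadd : forall x y, E x -> E y -> E (sadd x y).
Hypothesis E_sscal : forall a x, E x -> E (sscal a x).
Hypothesis nE_ge0 : forall x, E x -> 0 <= nE x.
Hypothesis nE_sscal : forall a x, E x -> nE (sscal a x) = Cmod a * nE x.

Let env := env_norm E nE.

Lemma nE_szero : nE szero = 0.
Proof. pose proof (nE_sscal C0 szero E_szero) as H; rewrite sscal_C0, Cmod_C0 in H; lra. Qed.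

Lemma E_ssum l : Forall E l -> E (ssum l).
Proof. induction 1; simpl; auto. Qed.

Lemma nsum_ge0 l : Forall E l -> 0 <= nsum nE l.
Proof. induction 1 as [|y l Hy _ IH]; simpl; [lra|]; specialize (nE_ge0 y Hy); lra. Qed.

Lemma nsum_map_sscal a l : Forall E l -> nsum nE (map (sscal a) l) = Cmod a * nsum nE l.
Proof. induction 1 as [|y l Hy _ IH]; simpl; [ring|]; rewrite IH, nE_sscal by auto; ring. Qed.

Lemma env_norm_glb x : E x -> is_glb (env_set E nE x) (env x).
Proof.
  intro Hx; apply (is_glb_glb_of _ 0).
  - exists (nE x + 0), (x :: nil); repeat split; [discriminate|now constructor|].
    simpl; now rewrite sadd_szero_r.
  - intros s [l [_ [Hl [_ ->]]]]; now apply nsum_ge0.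
Qed.

Lemma env_norm_le_nsum x l :
  E x -> l <> nil -> Forall E l -> x = ssum l -> env x <= nsum nE l.
Proof. intros Hx Hne Hl Hxl; apply (proj1 (env_norm_glb x Hx)); now exists l. Qed.

Lemma env_norm_ge x b : E x ->
  (forall l, l <> nil -> Forall E l -> x = ssum l -> b <= nsum nE l) -> b <= env x.
Proof.
  intros Hx Hb; apply (proj2 (env_norm_glb x Hx)).
  intros t [l [Hne [Hl [Hxl ->]]]]; auto.
Qed.

Lemma env_norm_szero : env szero = 0.
Proof.
  apply Rle_antisym.
  - rewrite <- nE_szero, <- Rplus_0_r.
    apply (env_norm_le_nsum _ (szero :: nil)); auto; [discriminate|].
    simpl; now rewrite sadd_szero_r.
  - apply env_norm_ge; auto; intros l _ Hl _; now apply nsum_ge0.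
Qed.

Lemma env_norm_sscal_le a x : E x -> env (sscal a x) <= Cmod a * env x.
Proof.
  intro Hx; destruct (Req_dec (Cmod a) 0) as [Ha|Ha].
  - assert (a = C0) as -> by exact (Complex.Cmod_eq_0 a Ha).
    rewrite sscal_C0, env_norm_szero, Cmod_C0; lra.
  - assert (Hapos : Cmod a > 0) by (pose proof (Cmod_ge0 a); lra).
    rewrite Rmult_comm; apply Rcomplements.Rle_div_l; [exact Hapos|].
    apply env_norm_ge; auto; intros l Hne Hl Hxl.
    apply Rcomplements.Rle_div_l; [exact Hapos|]; rewrite Rmult_comm.
    rewrite <- nsum_map_sscal by exact Hl.
    apply env_norm_le_nsum; auto.
    + now destruct l.
    + now apply Forall_map, (Forall_impl _ (E_sscal a)).
    + rewrite Hxl; symmetry; apply ssum_map; [apply sscal_szero|apply sscal_sadd].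
Qed.

Lemma env_norm_sscal a x : E x -> env (sscal a x) = Cmod a * env x.
Proof.
  intro Hx; apply Rle_antisym; [now apply env_norm_sscal_le|].
  destruct (classic (a = C0)) as [->|Ha].
  - rewrite Cmod_C0, Rmult_0_l, sscal_C0, env_norm_szero; lra.
  - pose proof (env_norm_sscal_le (Complex.Cinv a) (sscal a x) (E_sscal a x Hx)) as H.
    rewrite sscal_inv, Cmod_Cinv in H by exact Ha.
    pose proof (Cmod_pos a Ha).
    apply (Rmult_le_compat_l (Cmod a)) in H; [|lra].
    rewrite <- Rmult_assoc, Rinv_r, Rmult_1_l in H; lra.
Qed.

Lemma env_norm_triangle x y : E x -> E y -> env (sadd x y) <= env x + env y.
Proof.
  intros Hx Hy.
  enough (env (sadd x y) - env x <= env y) by lra.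
  apply env_norm_ge; auto; intros l2 Hne2 Hl2 Hy2.
  enough (env (sadd x y) - nsum nE l2 <= env x) by lra.
  apply env_norm_ge; auto; intros l1 Hne1 Hl1 Hx1.
  enough (env (sadd x y) <= nsum nE (l1 ++ l2)) by (rewrite nsum_app in *; lra).
  apply env_norm_le_nsum; auto.
  - now destruct l1.
  - now apply Forall_app.
  - now rewrite ssum_app, <- Hx1, <- Hy2.
Qed.

Lemma cont_lin_functional_ssum phi K :
  (forall x y, E x -> E y -> phi (sadd x y) = Cadd (phi x) (phi y)) ->
  (forall a x, E x -> phi (sscal a x) = Cmul a (phi x)) ->
  (forall x, E x -> Cmod (phi x) <= K * nE x) ->
  forall l, Forall E l -> Cmod (phi (ssum l)) <= K * nsum nE l.
Proof.
  intros Hadd Hscal HK; induction 1 as [|y l Hy Hl IH]; simpl.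
  - pose proof (Hscal C0 szero E_szero) as H0.
    rewrite sscal_C0, Cmul_C0_l in H0; rewrite H0, Cmod_C0; lra.
  - rewrite Hadd by auto using E_ssum.
    pose proof (Cmod_Cadd (phi y) (phi (ssum l))); pose proof (HK y Hy); nra.
Qed.

Lemma env_norm_pos x : dual_separates E nE -> E x -> x <> szero -> 0 < env x.
Proof.
  intros Hdual Hx Hne.
  destruct (Hdual x Hx Hne) as [phi [[Hadd [Hscal [K HK]]] Hphi]].
  pose proof (Cmod_pos _ Hphi) as Hv.
  assert (HKpos : 0 < K).
  { pose proof (HK x Hx); pose proof (nE_ge0 x Hx).
    destruct (Rle_or_lt K 0); [nra|auto]. }
  apply Rlt_le_trans with (Cmod (phi x) / K); [now apply Rdiv_lt_0_compat|].
  apply env_norm_ge; auto; intros l _ Hl Hxl.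
  apply Rcomplements.Rle_div_l; [exact HKpos|].
  rewrite Rmult_comm, Hxl; now apply cont_lin_functional_ssum.
Qed.

(* Every decomposition of [g] is carried to one of [f] by [T], which does not increase [nE]. *)
Lemma env_norm_symmetric :
  symmetric E nE -> in_c0 E -> symmetric E env.
Proof.
  intros Hsym Hc0 f g Hg Hfg.
  destruct (Hsym f g Hg Hfg) as [Hf _]; split; [exact Hf|].
  destruct (c0_rearrangement f g (Hc0 f Hf) (Hc0 g Hg) Hfg) as [c [pi [rho [Hc [Hrho Hfcg]]]]].
  set (T := fun h k => Cmul (c k) (h (pi k))).
  assert (HT : forall h, E h -> E (T h) /\ nE (T h) <= nE h)
    by (intros h Hh; apply Hsym; [exact Hh|now apply (mu_le_weighted_comp c pi rho)]).
  apply env_norm_ge; auto; intros l Hne Hl Hgl.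
  apply Rle_trans with (nsum nE (map T l)).
  - apply env_norm_le_nsum; auto.
    + now destruct l.
    + apply Forall_map; eapply Forall_impl; [|exact Hl]; intros h Hh; apply HT, Hh.
    + rewrite ssum_map, <- Hgl; [exact Hfcg| |].
      * apply functional_extensionality; intro k; apply Cmul_C0_r.
      * intros h h'; apply functional_extensionality; intro k; apply Cmul_Cadd_r.
  - apply nsum_map_le; eapply Forall_impl; [|exact Hl]; intros h Hh; apply HT, Hh.
Qed.

End Envelope.

Theorem mainTheorem2 (E : seqC -> Prop) (nE : seqC -> R) :
  quasi_normed_symmetric E nE ->
  in_c0 E ->
  dual_separates E nE ->
  is_norm E (env_norm E nE) /\ symmetric E (env_norm E nE).
Proof.
  intros [[HE0 [HEadd HEscal]] [[Hpos [Hhom _]] Hsym]] Hc0 Hdual.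
  assert (Hge : forall x, E x -> 0 <= nE x).
  { intros x Hx; destruct (classic (x = szero)) as [->|Hne].
    - rewrite (nE_szero E nE HE0 Hhom); lra.
    - now apply Rlt_le, Hpos. }
  split; [repeat split|].
  - intros x Hx Hne; now apply env_norm_pos.
  - intros a x Hx; now apply env_norm_sscal.
  - intros x y Hx Hy; now apply env_norm_triangle.
  - now apply env_norm_symmetric.
Qed.
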